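(* Let $w>1$, $h_v(x)=\tanh(w\cdot x+v)$ and $g_v(x)=x-h_v(x)$ for $v\in\mathbb{R}$. Let $v_-,v_+$ be the unique reals such that $g_{v_-}$ vanishes at its local maximum point and $g_{v_+}$ vanishes at its local minimum point, and define the pivots $p_-=p_-^{v_-}$ and $p_+=p_+^{v_+}$. Then for every $v\in\mathbb{R}$, the function $h_v$ has one, two, or three fixpoints, all lying in $[-1,1]$, and: (1) if $h_v$ has exactly one fixpoint $x_1$, then $x_1\le p_-$ or $p_+\le x_1$; (2) if $h_v$ has exactly two fixpoints $x_1<x_3$, then $x_1\le p_-<p_+\le x_3$; (3) if $h_v$ has exactly three fixpoints $x_1<x_2<x_3$, then $x_1\le p_-<x_2<p_+\le x_3$.
   Context: For $w>1$, each $g_v$ has exactly two stationary points, the smaller one $p_-^v$ a local maximum and the larger one $p_+^v$ a local minimum; the values $v_-,v_+$ exist, are unique, and satisfy $v_+<v_-$. *)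

From Stdlib Require Import Reals.
Open Scope R_scope.

Definition h (w v x : R) : R := tanh (w * x + v).
Definition g (w v x : R) : R := x - h w v x.

Definition is_fix (w v x : R) : Prop := h w v x = x.

Definition local_max_pt (f : R -> R) (p : R) : Prop :=
  exists eps : R, 0 < eps /\ forall y, Rabs (y - p) < eps -> f y <= f p.
Definition local_min_pt (f : R -> R) (p : R) : Prop :=
  exists eps : R, 0 < eps /\ forall y, Rabs (y - p) < eps -> f p <= f y.

From Stdlib Require Import Reals Lra.
From Coquelicot Require Import Coquelicot.
Open Scope R_scope.

(* Substituting u = w x + v, x is a fixpoint of h_v exactly when x = tanh u and
   u - w tanh u = v.  The map u |-> u - w tanh u is odd, increasing on (-oo, -a] and
   [a, +oo) and decreasing on [-a, a], where w (1 - tanh a ^ 2) = 1.  Hence each of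
   these three zones holds at most one solution, the intermediate value theorem says
   which zones hold one, and tanh maps the zones onto x <= p_-, p_- <= x <= p_+ and
   p_+ <= x.  The local extrema of g_v sit at w x + v = -a resp. a, which makes the
   pivots p_- = - tanh a and p_+ = tanh a. *)

Lemma tanh_exp x : tanh x = 1 - 2 / (exp x * exp x + 1).
Proof.
  unfold tanh, sinh, cosh; rewrite exp_Ropp.
  assert (H := exp_pos x); field; split; nra.
Qed.

Lemma tanh_bound x : -1 < tanh x < 1.
Proof.
  rewrite tanh_exp; assert (H := exp_pos x).
  assert (0 < 2 / (exp x * exp x + 1) < 2); [|lra].
  split; [apply Rdiv_lt_0_compat; nra|].
  apply Rmult_lt_reg_r with (exp x * exp x + 1); [nra|].
  unfold Rdiv; rewrite Rmult_assoc, Rinv_l; nra.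
Qed.

Lemma tanh_lt x y : x < y -> tanh x < tanh y.
Proof.
  intros Hxy; rewrite !tanh_exp.
  assert (Hx := exp_pos x); assert (Hy := exp_pos y).
  assert (Hexp := exp_increasing _ _ Hxy).
  assert (2 / (exp y * exp y + 1) < 2 / (exp x * exp x + 1)); [|lra].
  apply Rmult_lt_compat_l; [lra|]; apply Rinv_lt_contravar; nra.
Qed.

Lemma tanh_lt_iff x y : tanh x < tanh y <-> x < y.
Proof.
  split; [|apply tanh_lt]; intros H.
  destruct (Rlt_or_le x y) as [|[Hyx| ->]]; auto.
  - apply tanh_lt in Hyx; lra.
  - lra.
Qed.

Lemma tanh_le_iff x y : tanh x <= tanh y <-> x <= y.
Proof.
  split; intros H.
  - apply Rnot_lt_le; intros Hyx; apply tanh_lt in Hyx; lra.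
  - apply Rnot_lt_le; intros Hyx; rewrite tanh_lt_iff in Hyx; lra.
Qed.

Lemma tanh_opp x : tanh (- x) = - tanh x.
Proof.
  unfold tanh, sinh, cosh; rewrite Ropp_involutive.
  assert (H := exp_pos x); assert (H' := exp_pos (- x)); field; lra.
Qed.

Lemma derivable_pt_lim_tanh x : derivable_pt_lim tanh x (1 - tanh x ^ 2).
Proof.
  apply is_derive_Reals, (is_derive_ext (fun u => 1 - 2 / (exp u * exp u + 1))).
  { intros u; now rewrite tanh_exp. }
  assert (H := exp_pos x); auto_derive; [nra|].
  rewrite tanh_exp; field; nra.
Qed.
Definition fix_bias (w u : R) : R := u - w * tanh u.

Lemma fix_bias_opp w u : fix_bias w (- u) = - fix_bias w u.
Proof. unfold fix_bias; rewrite tanh_opp; ring. Qed.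

Lemma derivable_pt_lim_fix_bias w u :
  derivable_pt_lim (fix_bias w) u (1 - w * (1 - tanh u ^ 2)).
Proof.
  apply derivable_pt_lim_minus; [apply derivable_pt_lim_id|].
  apply derivable_pt_lim_scal, derivable_pt_lim_tanh.
Qed.

Lemma continuity_fix_bias w : continuity (fix_bias w).
Proof.
  intros u; apply derivable_continuous_pt.
  eexists; apply derivable_pt_lim_fix_bias.
Qed.

Lemma fix_bias_ivt w v x y : x <= y ->
  (fix_bias w x - v) * (fix_bias w y - v) <= 0 ->
  exists u, x <= u <= y /\ fix_bias w u = v.
Proof.
  intros Hxy Hsign.
  assert (Hc : continuity (fun u => fix_bias w u - v)).
  { apply continuity_minus; [apply continuity_fix_bias|apply continuity_const].
    now intros ? ?. }
  destruct (IVT_cor _ x y Hc Hxy Hsign) as [u [Hu Hu0]].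
  exists u; split; [exact Hu|lra].
Qed.

Lemma is_fix_tanh w v u : is_fix w v (tanh u) <-> fix_bias w u = v.
Proof.
  unfold is_fix, h, fix_bias; split; intros H.
  - enough (w * tanh u + v = u) by lra.
    apply Rle_antisym; apply tanh_le_iff; rewrite H; lra.
  - replace (w * tanh u + v) with u by lra; reflexivity.
Qed.

Lemma is_fix_root w v x : is_fix w v x ->
  x = tanh (w * x + v) /\ fix_bias w (w * x + v) = v.
Proof.
  intros Hx; assert (Ex : x = tanh (w * x + v)) by exact (eq_sym Hx).
  split; [exact Ex|]; apply is_fix_tanh; now rewrite <- Ex.
Qed.

Lemma is_fix_opp w v x : is_fix w (- v) (- x) <-> is_fix w v x.
Proof.
  unfold is_fix, h; replace (w * - x + - v) with (- (w * x + v)) by ring.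
  rewrite tanh_opp; lra.
Qed.

Lemma is_fix_bound w v x : is_fix w v x -> -1 < x < 1.
Proof. intros Hx; rewrite <- Hx; apply tanh_bound. Qed.

(* The critical point is a = artanh (sqrt (1 - 1/w)), written through ln. *)
Lemma ex_fix_bias_critical w : 1 < w -> exists a, 0 < a /\ w * (1 - tanh a ^ 2) = 1.
Proof.
  intros Hw; set (t := sqrt (1 - / w)).
  assert (Hiw : 0 < / w < 1).
  { split; [apply Rinv_0_lt_compat; lra|].
    rewrite <- Rinv_1; apply Rinv_lt_contravar; lra. }
  assert (Ht2 : t * t = 1 - / w) by (apply sqrt_sqrt; lra).
  assert (Ht0 : 0 < t) by (apply sqrt_lt_R0; lra).
  assert (Ht1 : t < 1) by nra.
  set (q := (1 + t) / (1 - t)).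
  assert (Hq : 1 < q).
  { apply Rmult_lt_reg_r with (1 - t); [lra|].
    unfold q, Rdiv; rewrite Rmult_assoc, Rinv_l; lra. }
  exists (ln q / 2); split.
  - assert (0 < ln q) by (rewrite <- ln_1; apply ln_increasing; lra); lra.
  - rewrite tanh_exp, <- exp_plus.
    replace (ln q / 2 + ln q / 2) with (ln q) by field.
    rewrite exp_ln by lra; unfold q.
    replace (1 - 2 / ((1 + t) / (1 - t) + 1)) with t by (field; lra).
    simpl; rewrite Rmult_1_r, Ht2; field; lra.
Qed.

Lemma local_max_pt_affine (f F : R -> R) (alpha beta w v p : R) :
  0 < alpha -> 0 < w -> (forall y, F (w * y + v) = alpha * f y + beta) ->
  local_max_pt f p -> local_max_pt F (w * p + v).
Proof.
  intros Halpha Hw HF [eps [Heps Hmax]]; exists (w * eps); split; [nra|].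
  intros z Hz; set (y := (z - v) / w).
  assert (Ez : z = w * y + v) by (unfold y; field; lra).
  rewrite Ez, !HF; apply Rplus_le_compat_r, Rmult_le_compat_l; [lra|].
  apply Hmax; rewrite Ez in Hz.
  replace (w * y + v - (w * p + v)) with (w * (y - p)) in Hz by ring.
  rewrite Rabs_mult, (Rabs_right w) in Hz by lra.
  apply Rmult_lt_reg_l with w; lra.
Qed.

Lemma not_local_max_pt_lt_right (f : R -> R) c d : c < d ->
  (forall y, c < y <= d -> f c < f y) -> ~ local_max_pt f c.
Proof.
  intros Hcd Hlt [eps [Heps Hmax]]; set (y := c + Rmin (eps / 2) (d - c)).
  assert (Hm1 := Rmin_l (eps / 2) (d - c)); assert (Hm2 := Rmin_r (eps / 2) (d - c)).
  assert (0 < Rmin (eps / 2) (d - c)) by (apply Rmin_pos; lra).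
  assert (f y <= f c) by (apply Hmax; unfold y; rewrite Rabs_right; lra).
  assert (f c < f y) by (apply Hlt; unfold y; lra).
  lra.
Qed.

Lemma not_local_max_pt_lt_left (f : R -> R) c d : d < c ->
  (forall y, d <= y < c -> f c < f y) -> ~ local_max_pt f c.
Proof.
  intros Hdc Hlt [eps [Heps Hmax]]; set (y := c - Rmin (eps / 2) (c - d)).
  assert (Hm1 := Rmin_l (eps / 2) (c - d)); assert (Hm2 := Rmin_r (eps / 2) (c - d)).
  assert (0 < Rmin (eps / 2) (c - d)) by (apply Rmin_pos; lra).
  assert (f y <= f c) by (apply Hmax; unfold y; rewrite Rabs_left; lra).
  assert (f c < f y) by (apply Hlt; unfold y; lra).
  lra.
Qed.

Lemma fix_bias_g w v y : fix_bias w (w * y + v) = w * g w v y + v.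
Proof. unfold fix_bias, g, h; ring. Qed.

Lemma g_opp w v y : g w (- v) (- y) = - g w v y.
Proof.
  unfold g, h; replace (w * - y + - v) with (- (w * y + v)) by ring.
  rewrite tanh_opp; ring.
Qed.

Lemma local_min_pt_g_opp w v p :
  local_min_pt (g w v) p -> local_max_pt (g w (- v)) (- p).
Proof.
  intros [eps [Heps Hmin]]; exists eps; split; [exact Heps|].
  intros y Hy; rewrite <- (Ropp_involutive y), !g_opp.
  apply Ropp_le_contravar, Hmin.
  now replace (- y - p) with (- (y - - p)) by ring; rewrite Rabs_Ropp.
Qed.

Lemma is_fix_le_tanh w v x c : is_fix w v x -> x <= tanh c -> w * x + v <= c.
Proof. intros Hx H; rewrite <- Hx in H; now apply tanh_le_iff. Qed.

Lemma is_fix_ge_tanh w v x c : is_fix w v x -> tanh c <= x -> c <= w * x + v.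
Proof. intros Hx H; rewrite <- Hx in H; now apply tanh_le_iff. Qed.

Lemma is_fix_eq_on (P : R -> Prop) w v x y :
  (forall u u', P u -> P u' -> u < u' -> fix_bias w u <> fix_bias w u') ->
  is_fix w v x -> is_fix w v y -> P (w * x + v) -> P (w * y + v) -> x = y.
Proof.
  intros Hinj Hx Hy Px Py.
  destruct (is_fix_root _ _ _ Hx) as [Ex Vx], (is_fix_root _ _ _ Hy) as [Ey Vy].
  rewrite Ex, Ey; f_equal.
  destruct (Rtotal_order (w * x + v) (w * y + v)) as [H|[H|H]]; [exfalso|exact H|exfalso].
  - apply (Hinj _ _ Px Py H); congruence.
  - apply (Hinj _ _ Py Px H); congruence.
Qed.

Section Critical.

Variables w a : R.
Hypotheses (Hw : 1 < w) (Ha : 0 < a) (Hwa : w * (1 - tanh a ^ 2) = 1).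

Lemma tanh_critical_pos : 0 < tanh a.
Proof. assert (H := tanh_lt (- a) a ltac:(lra)); rewrite tanh_opp in H; lra. Qed.

Lemma fix_bias_mvt x y : x < y -> exists c, x < c < y /\
  fix_bias w y - fix_bias w x = w * (tanh c ^ 2 - tanh a ^ 2) * (y - x).
Proof.
  intros Hxy; destruct (MVT_cor2 (fix_bias w) (fun u => 1 - w * (1 - tanh u ^ 2)) x y Hxy) as [c [Ec Hc]].
  { intros c _; apply derivable_pt_lim_fix_bias. }
  exists c; split; [exact Hc|]; rewrite Ec, <- Hwa at 1; ring.
Qed.

Lemma fix_bias_lt_left x y : x < y -> y <= - a -> fix_bias w x < fix_bias w y.
Proof.
  intros Hxy Hy; destruct (fix_bias_mvt x y Hxy) as [c [Hc Ec]].
  assert (Htc : tanh c < - tanh a) by (rewrite <- tanh_opp; apply tanh_lt; lra).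
  assert (Ht := tanh_critical_pos).
  assert (0 < w * (tanh c ^ 2 - tanh a ^ 2) * (y - x)); [|lra].
  apply Rmult_lt_0_compat; [apply Rmult_lt_0_compat; [lra|]; simpl; nra|lra].
Qed.

Lemma fix_bias_lt_right x y : a <= x -> x < y -> fix_bias w x < fix_bias w y.
Proof.
  intros Hx Hxy; assert (H := fix_bias_lt_left (- y) (- x) ltac:(lra) ltac:(lra)).
  rewrite !fix_bias_opp in H; lra.
Qed.

Lemma fix_bias_gt_mid x y : - a <= x -> x < y -> y <= a -> fix_bias w y < fix_bias w x.
Proof.
  intros Hx Hxy Hy; destruct (fix_bias_mvt x y Hxy) as [c [Hc Ec]].
  assert (Htc1 : - tanh a < tanh c) by (rewrite <- tanh_opp; apply tanh_lt; lra).
  assert (Htc2 : tanh c < tanh a) by (apply tanh_lt; lra).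
  assert (w * (tanh c ^ 2 - tanh a ^ 2) * (y - x) < 0); [|lra].
  apply Rmult_neg_pos; [|lra]; apply Rmult_pos_neg; [lra|]; simpl; nra.
Qed.

Lemma local_max_pt_fix_bias c : local_max_pt (fix_bias w) c -> c = - a.
Proof.
  intros Hmax; destruct (Rtotal_order c (- a)) as [Hc|[Hc|Hc]]; [|exact Hc|].
  - exfalso; revert Hmax; apply (not_local_max_pt_lt_right _ c (- a) Hc).
    intros y Hy; apply fix_bias_lt_left; lra.
  - exfalso; revert Hmax; destruct (Rle_or_lt c a) as [Hca|Hca].
    + apply (not_local_max_pt_lt_left _ c (- a) Hc).
      intros y Hy; apply fix_bias_gt_mid; lra.
    + apply (not_local_max_pt_lt_right _ c (c + 1) ltac:(lra)).
      intros y Hy; apply fix_bias_lt_right; lra.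
Qed.

Lemma local_max_pt_g_pivot v p :
  local_max_pt (g w v) p -> g w v p = 0 -> p = - tanh a.
Proof.
  intros Hmax Hp.
  assert (Hu : w * p + v = - a).
  { apply local_max_pt_fix_bias, (local_max_pt_affine (g w v) _ w v); [lra|lra| |exact Hmax].
    apply fix_bias_g. }
  unfold g, h in Hp; rewrite Hu, tanh_opp in Hp; lra.
Qed.

Lemma local_min_pt_g_pivot v p :
  local_min_pt (g w v) p -> g w v p = 0 -> p = tanh a.
Proof.
  intros Hmin Hp.
  assert (Hp' : g w (- v) (- p) = 0) by (rewrite g_opp, Hp; ring).
  assert (H := local_max_pt_g_pivot _ _ (local_min_pt_g_opp _ _ _ Hmin) Hp'); lra.
Qed.

Lemma is_fix_eq_left v x y : is_fix w v x -> is_fix w v y ->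
  x <= - tanh a -> y <= - tanh a -> x = y.
Proof.
  rewrite <- tanh_opp; intros Hx Hy Hxa Hya.
  apply (is_fix_eq_on (fun u => u <= - a) w v); auto using is_fix_le_tanh.
  intros u u' Hu Hu' Huu'; apply Rlt_not_eq, fix_bias_lt_left; lra.
Qed.

Lemma is_fix_eq_right v x y : is_fix w v x -> is_fix w v y ->
  tanh a <= x -> tanh a <= y -> x = y.
Proof.
  intros Hx Hy Hxa Hya.
  apply (is_fix_eq_on (fun u => a <= u) w v); auto using is_fix_ge_tanh.
  intros u u' Hu Hu' Huu'; apply Rlt_not_eq, fix_bias_lt_right; lra.
Qed.

Lemma is_fix_eq_mid v x y : is_fix w v x -> is_fix w v y ->
  - tanh a <= x <= tanh a -> - tanh a <= y <= tanh a -> x = y.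
Proof.
  rewrite <- tanh_opp; intros Hx Hy [Hx1 Hx2] [Hy1 Hy2].
  apply (is_fix_eq_on (fun u => - a <= u <= a) w v);
    auto using is_fix_le_tanh, is_fix_ge_tanh.
  intros u u' Hu Hu' Huu'; apply not_eq_sym, Rlt_not_eq, fix_bias_gt_mid; lra.
Qed.

Lemma ex_fix_lt_pivot_left v : v < fix_bias w (- a) ->
  exists x, is_fix w v x /\ x < - tanh a.
Proof.
  intros Hv; set (l := Rmin (- a) (v - w)).
  assert (Hl : fix_bias w l < v).
  { assert (Hlv := Rmin_r (- a) (v - w)); assert (Ht := tanh_bound l).
    assert (0 < w * (tanh l + 1)) by (apply Rmult_lt_0_compat; lra).
    unfold fix_bias; fold l in Hlv; nra. }
  destruct (fix_bias_ivt w v l (- a)) as [u [Hu Eu]]; [apply Rmin_l|nra|].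
  assert (Hua : u < - a) by (destruct Hu as [_ [Hu| ->]]; [exact Hu|lra]).
  exists (tanh u); split; [now apply is_fix_tanh|].
  rewrite <- tanh_opp; now apply tanh_lt.
Qed.

Lemma ex_fix_gt_pivot_right v : fix_bias w a < v ->
  exists x, is_fix w v x /\ tanh a < x.
Proof.
  intros Hv; destruct (ex_fix_lt_pivot_left (- v)) as [x [Hx Hxa]].
  { rewrite fix_bias_opp; lra. }
  exists (- x); split; [|lra].
  apply is_fix_opp; now rewrite Ropp_involutive.
Qed.

Lemma ex_fix_mid v : fix_bias w a <= v <= fix_bias w (- a) ->
  exists x, is_fix w v x /\ - tanh a <= x <= tanh a.
Proof.
  intros Hv; destruct (fix_bias_ivt w v (- a) a) as [u [Hu Eu]]; [lra|nra|].
  exists (tanh u); split; [now apply is_fix_tanh|].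
  rewrite <- tanh_opp; split; apply tanh_le_iff; lra.
Qed.

Lemma is_fix_cases v x : is_fix w v x ->
  (x <= - tanh a /\ v <= fix_bias w (- a)) \/
  (- tanh a < x < tanh a /\ fix_bias w a < v < fix_bias w (- a)) \/
  (tanh a <= x /\ fix_bias w a <= v).
Proof.
  intros Hx; destruct (is_fix_root _ _ _ Hx) as [Ex Ev]; set (u := w * x + v) in *.
  rewrite <- tanh_opp, Ex, <- Ev.
  destruct (Rle_or_lt u (- a)) as [Hl|Hl]; [|destruct (Rlt_or_le u a) as [Hr|Hr]].
  - left; split; [now apply tanh_le_iff|].
    destruct Hl as [Hl| ->]; [left; now apply fix_bias_lt_left|right; reflexivity].
  - right; left; split; [split; now apply tanh_lt|].
    split; apply fix_bias_gt_mid; lra.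
  - right; right; split; [now apply tanh_le_iff|].
    destruct Hr as [Hr| <-]; [left; now apply fix_bias_lt_right|right; reflexivity].
Qed.

Lemma is_fix_count v :
  (exists x1, forall x, is_fix w v x <-> x = x1) \/
  (exists x1 x3, x1 < x3 /\ forall x, is_fix w v x <-> (x = x1 \/ x = x3)) \/
  (exists x1 x2 x3, x1 < x2 /\ x2 < x3 /\
     forall x, is_fix w v x <-> (x = x1 \/ x = x2 \/ x = x3)).
Proof.
  assert (Hcrit : fix_bias w a < fix_bias w (- a)) by (apply fix_bias_gt_mid; lra).
  assert (Ht := tanh_critical_pos).
  destruct (Rtotal_order v (fix_bias w a)) as [Hv|[Hv|Hv]].
  - destruct (ex_fix_lt_pivot_left v) as [x1 [H1 Hx1]]; [lra|].
    left; exists x1; intros x; split; [|intros ->; exact H1].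
    intros Hx; destruct (is_fix_cases v x Hx) as [[? _]|[[_ ?]|[_ ?]]]; [|lra|lra].
    apply (is_fix_eq_left v); auto; lra.
  - destruct (ex_fix_lt_pivot_left v) as [x1 [H1 Hx1]]; [lra|].
    assert (H3 : is_fix w v (tanh a)) by (now apply is_fix_tanh).
    right; left; exists x1, (tanh a); split; [lra|]; intros x; split.
    + intros Hx; destruct (is_fix_cases v x Hx) as [[? _]|[[_ ?]|[? _]]]; [left|lra|right].
      * apply (is_fix_eq_left v); auto; lra.
      * apply (is_fix_eq_right v); auto; lra.
    + intros [-> | ->]; assumption.
  - destruct (ex_fix_gt_pivot_right v) as [x3 [H3 Hx3]]; [lra|].
    destruct (Rtotal_order v (fix_bias w (- a))) as [Hv'|[Hv'|Hv']].
    + destruct (ex_fix_lt_pivot_left v) as [x1 [H1 Hx1]]; [lra|].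
      destruct (ex_fix_mid v) as [x2 [H2 Hx2]]; [lra|].
      right; right; exists x1, x2, x3; split; [lra|split; [lra|]]; intros x; split.
      * intros Hx; destruct (is_fix_cases v x Hx) as [[? _]|[[? _]|[? _]]];
          [left|right; left|right; right].
        -- apply (is_fix_eq_left v); auto; lra.
        -- apply (is_fix_eq_mid v); auto; lra.
        -- apply (is_fix_eq_right v); auto; lra.
      * intros [-> | [-> | ->]]; assumption.
    + assert (H1 : is_fix w v (- tanh a)) by (rewrite <- tanh_opp; now apply is_fix_tanh).
      right; left; exists (- tanh a), x3; split; [lra|]; intros x; split.
      * intros Hx; destruct (is_fix_cases v x Hx) as [[? _]|[[_ ?]|[? _]]]; [left|lra|right].
        -- apply (is_fix_eq_left v); auto; lra.
        -- apply (is_fix_eq_right v); auto; lra.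
      * intros [-> | ->]; assumption.
    + left; exists x3; intros x; split; [|intros ->; exact H3].
      intros Hx; destruct (is_fix_cases v x Hx) as [[_ ?]|[[_ ?]|[? _]]]; [lra|lra|].
      apply (is_fix_eq_right v); auto; lra.
Qed.

Lemma is_fix_mid_outer v x : is_fix w v x -> - tanh a < x < tanh a ->
  (exists y, is_fix w v y /\ y < - tanh a) /\ (exists z, is_fix w v z /\ tanh a < z).
Proof.
  intros Hx Hxa; destruct (is_fix_cases v x Hx) as [[? _]|[[_ Hv]|[? _]]]; try lra.
  split; [apply ex_fix_lt_pivot_left|apply ex_fix_gt_pivot_right]; lra.
Qed.

Lemma is_fix_unique_pivots v x1 : (forall x, is_fix w v x <-> x = x1) ->
  x1 <= - tanh a \/ tanh a <= x1.
Proof.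
  intros Hall; destruct (Rle_or_lt x1 (- tanh a)) as [H|H]; [now left|].
  destruct (Rle_or_lt (tanh a) x1) as [H'|H']; [now right|exfalso].
  destruct (is_fix_mid_outer v x1) as [[y [Hy Hya]] _]; [now apply Hall|lra|].
  apply Hall in Hy; lra.
Qed.

Lemma is_fix_two_pivots v x1 x3 : x1 < x3 ->
  (forall x, is_fix w v x <-> (x = x1 \/ x = x3)) ->
  x1 <= - tanh a /\ - tanh a < tanh a /\ tanh a <= x3.
Proof.
  intros H13 Hall; assert (Ht := tanh_critical_pos).
  assert (H1 : is_fix w v x1) by (apply Hall; auto).
  assert (H3 : is_fix w v x3) by (apply Hall; auto).
  split; [|split; [lra|]].
  - destruct (Rle_or_lt x1 (- tanh a)) as [H|H]; [exact H|exfalso].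
    destruct (Rlt_or_le x1 (tanh a)) as [H'|H'].
    + destruct (is_fix_mid_outer v x1) as [[y [Hy Hya]] _]; [auto|lra|].
      apply Hall in Hy; lra.
    + assert (x1 = x3) by (apply (is_fix_eq_right v); auto; lra); lra.
  - destruct (Rle_or_lt (tanh a) x3) as [H|H]; [exact H|exfalso].
    destruct (Rlt_or_le (- tanh a) x3) as [H'|H'].
    + destruct (is_fix_mid_outer v x3) as [_ [z [Hz Hza]]]; [auto|lra|].
      apply Hall in Hz; lra.
    + assert (x1 = x3) by (apply (is_fix_eq_left v); auto; lra); lra.
Qed.

Lemma is_fix_three_pivots v x1 x2 x3 : x1 < x2 -> x2 < x3 ->
  (forall x, is_fix w v x <-> (x = x1 \/ x = x2 \/ x = x3)) ->
  x1 <= - tanh a /\ - tanh a < x2 /\ x2 < tanh a /\ tanh a <= x3.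
Proof.
  intros H12 H23 Hall.
  assert (H1 : is_fix w v x1) by (apply Hall; auto).
  assert (H2 : is_fix w v x2) by (apply Hall; auto).
  assert (H3 : is_fix w v x3) by (apply Hall; auto).
  assert (Hl : - tanh a < x2).
  { apply Rnot_le_lt; intros H.
    assert (x1 = x2) by (apply (is_fix_eq_left v); auto; lra); lra. }
  assert (Hr : x2 < tanh a).
  { apply Rnot_le_lt; intros H.
    assert (x2 = x3) by (apply (is_fix_eq_right v); auto; lra); lra. }
  split; [|split; [exact Hl|split; [exact Hr|]]]; apply Rnot_lt_le; intros H.
  - assert (x1 = x2) by (apply (is_fix_eq_mid v); auto; lra); lra.
  - assert (x2 = x3) by (apply (is_fix_eq_mid v); auto; lra); lra.
Qed.

End Critical.

Theorem proposition10 (w vm vp pm pp : R) (hw : 1 < w)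
  (Hpm : local_max_pt (g w vm) pm) (Hgpm : g w vm pm = 0)
  (Hpp : local_min_pt (g w vp) pp) (Hgpp : g w vp pp = 0) :
  forall v : R,
    (forall x, is_fix w v x -> -1 <= x <= 1) /\
    ((exists x1, forall x, is_fix w v x <-> x = x1) \/
     (exists x1 x3, x1 < x3 /\ forall x, is_fix w v x <-> (x = x1 \/ x = x3)) \/
     (exists x1 x2 x3, x1 < x2 /\ x2 < x3 /\
        forall x, is_fix w v x <-> (x = x1 \/ x = x2 \/ x = x3))) /\
    (forall x1, (forall x, is_fix w v x <-> x = x1) ->
        x1 <= pm \/ pp <= x1) /\
    (forall x1 x3, x1 < x3 ->
        (forall x, is_fix w v x <-> (x = x1 \/ x = x3)) ->
        x1 <= pm /\ pm < pp /\ pp <= x3) /\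
    (forall x1 x2 x3, x1 < x2 -> x2 < x3 ->
        (forall x, is_fix w v x <-> (x = x1 \/ x = x2 \/ x = x3)) ->
        x1 <= pm /\ pm < x2 /\ x2 < pp /\ pp <= x3).
Proof.
  destruct (ex_fix_bias_critical w hw) as [a [Ha Hwa]].
  rewrite (local_max_pt_g_pivot w a hw Ha Hwa vm pm Hpm Hgpm),
    (local_min_pt_g_pivot w a hw Ha Hwa vp pp Hpp Hgpp).
  intros v; split; [|split; [|split; [|split]]].
  - intros x Hx; assert (H := is_fix_bound w v x Hx); lra.
  - exact (is_fix_count w a hw Ha Hwa v).
  - exact (is_fix_unique_pivots w a hw Ha Hwa v).
  - exact (is_fix_two_pivots w a hw Ha Hwa v).
  - exact (is_fix_three_pivots w a hw Ha Hwa v).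
Qed.
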